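(* Let $\mathcal{U}$ be a uniformity on a set $X$ and let $\widehat{\mathcal{U}}$ be its completion (a uniformity on the completion $\widehat{X}\supseteq X$). Then $\mathcal{U} =_T \widehat{\mathcal{U}}$, where both are ordered by reverse inclusion.
   Context: A directed set is a partially ordered set in which any two elements have a common upper bound. For directed sets $P,Q$, $P \ge_T Q$ means there is a map $\phi:P\to Q$ such that $\phi(C)$ is cofinal in $Q$ for every cofinal $C\subseteq P$; $P =_T Q$ means $P\ge_T Q$ and $Q \ge_T P$. *)

From HB Require Import structures.
From mathcomp Require Import all_boot all_order all_algebra.
From mathcomp Require Import all_classical all_reals all_analysis.
Set Implicit Arguments. Unset Strict Implicit. Unset Printing Implicit Defensive.
Local Open Scope classical_set_scope.

(* A (directed) preordered set is given as a carrier set P : set A together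
   with a relation le on A (only its restriction to P matters). *)

Definition cofinal {A : Type} (le : A -> A -> Prop) (P C : set A) : Prop :=
  C `<=` P /\ forall p, P p -> exists2 c, C c & le p c.

Definition tukey_ge {A B : Type} (leA : A -> A -> Prop) (P : set A)
    (leB : B -> B -> Prop) (Q : set B) : Prop :=
  exists phi : A -> B,
    (forall p, P p -> Q (phi p)) /\
    forall C, cofinal leA P C -> cofinal leB Q (phi @` C).

Definition tukey_eq {A B : Type} (leA : A -> A -> Prop) (P : set A)
    (leB : B -> B -> Prop) (Q : set B) : Prop :=
  tukey_ge leA P leB Q /\ tukey_ge leB Q leA P.

Definition rev_incl {T : Type} (U V : set T) : Prop := V `<=` U.

Definition entourages_of (X : uniformType) : set (set (X * X)) :=
  [set U | entourage U].

Definition complete_uniform (Y : uniformType) : Prop :=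
  forall F : set_system Y, ProperFilter F -> cauchy F -> exists y : Y, F --> y.

Definition uniform_embedding (X Y : uniformType) (i : X -> Y) : Prop :=
  injective i /\
  forall U : set (X * X),
    entourage U <->
    exists2 W : set (Y * Y), entourage W &
      [set xy : X * X | W (i xy.1, i xy.2)] `<=` U.

Definition is_completion (X Y : uniformType) (i : X -> Y) : Prop :=
  complete_uniform Y /\ uniform_embedding i /\ dense (range i).
Arguments entourages_of X : clear implicits.

From mathcomp Require Import all_boot all_order all_algebra.
From mathcomp Require Import all_classical all_reals all_analysis.
Local Open Scope classical_set_scope.

(* Pulling back along i x i is a
   monotone cofinal map from the entourages of Y to those of X.  Conversely
   an entourage U of X extends to the entourage of Y made of the pairs whose
   nearby points of X are U-related; by density, the extension of the
   pullback of split_ent (split_ent W) lies inside W, so extension is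
   cofinal too. *)

Definition convergent_map {A B : Type} (leA : A -> A -> Prop) (P : set A)
    (leB : B -> B -> Prop) (Q : set B) (phi : A -> B) : Prop :=
  (forall p, P p -> Q (phi p)) /\
  forall q, Q q -> exists2 p, P p & forall p', P p' -> leA p p' -> leB q (phi p').

Lemma convergent_map_tukey_ge {A B : Type} (leA : A -> A -> Prop) (P : set A)
    (leB : B -> B -> Prop) (Q : set B) (phi : A -> B) :
  convergent_map leA P leB Q phi -> tukey_ge leA P leB Q.
Proof.
move=> [PQ phi_conv]; exists phi; split=> // C [CP C_cof]; split.
  by move=> _ [c Cc <-]; exact/PQ/CP.
move=> q Qq; have [p Pp p_conv] := phi_conv q Qq.
have [c Cc le_pc] := C_cof p Pp.
by exists (phi c); [exists c | exact/p_conv/le_pc/CP].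
Qed.

Section DenseUniformEmbedding.
Variables (X Y : uniformType) (i : X -> Y).

Definition ent_comap (W : set (Y * Y)) : set (X * X) :=
  [set xy | W (i xy.1, i xy.2)].

Hypothesis i_induced : forall U : set (X * X),
  entourage U <-> exists2 W, entourage W & ent_comap W `<=` U.
Hypothesis i_dense : dense (range i).

Definition ent_extend (U : set (X * X)) : set (Y * Y) :=
  [set yy | exists2 V, entourage V &
    forall x1 x2, V (i x1, yy.1) -> V (yy.2, i x2) -> U (x1, x2)].

Lemma entourage_comap W : entourage W -> entourage (ent_comap W).
Proof. by move=> entW; apply/i_induced; exists W. Qed.

Lemma comap_convergent :
  convergent_map rev_incl (entourages_of Y) rev_incl (entourages_of X) ent_comap.
Proof.
split; first exact: entourage_comap.
move=> U /i_induced [W entW sWU]; exists W => // W' _ sW'W.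
by move=> xy /sW'W /sWU.
Qed.

Lemma ent_extendS {U U' : set (X * X)} :
  U `<=` U' -> ent_extend U `<=` ent_extend U'.
Proof. by move=> sUU' yy [V entV UV]; exists V => // x1 x2 V1 V2; exact/sUU'/UV. Qed.

Lemma entourage_extend U : entourage U -> entourage (ent_extend U).
Proof.
move=> /i_induced [W entW sWU].
pose V := split_ent (split_ent W).
have entV : entourage V by do 2 apply: entourage_split_ent.
apply: (filterS _ entV) => -[y1 y2] Vy; exists V => // x1 x2 V1 V2.
apply: sWU; apply: (entourage_split y2) => //.
  exact: (entourage_split y1).
exact: split_ent_subset.
Qed.

Lemma dense_range_entourage (y : Y) {A : set (Y * Y)} :
  entourage A -> exists x, A (y, i x).
Proof.
move=> entA; have nbhsA := nbhs_entourage y entA.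
have [z [Az [x _ xz]]] :=
  @i_dense (xsection A y)° (ex_intro _ y nbhsA) (@open_interior _ _).
by exists x; rewrite xz; apply/xsectionP; exact: interior_subset.
Qed.

Lemma ent_extend_comap_sub {W : set (Y * Y)} :
  entourage W -> ent_extend (ent_comap (split_ent (split_ent W))) `<=` W.
Proof.
move=> entW [y1 y2] [V entV near_rel] /=.
set S := split_ent (split_ent W).
have entS : entourage S by do 2 apply: entourage_split_ent.
have [x1 [Vx1 Sx1]] :=
  dense_range_entourage y1 (filterI (entourage_inv entV) entS).
have [x2 [Vx2 Sx2]] :=
  dense_range_entourage y2 (filterI entV (entourage_inv entS)).
apply: (entourage_split (i x2)) => //.
  exact: (entourage_split (i x1)) Sx1 (near_rel _ _ Vx1 Vx2).
exact: split_ent_subset Sx2.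
Qed.

Lemma extend_convergent :
  convergent_map rev_incl (entourages_of X) rev_incl (entourages_of Y) ent_extend.
Proof.
split; first exact: entourage_extend.
move=> W entW; exists (ent_comap (split_ent (split_ent W))).
  exact: entourage_comap.
by move=> U' _ sU' yy /(ent_extendS sU') /(ent_extend_comap_sub entW).
Qed.

End DenseUniformEmbedding.

Theorem mainTheorem2 (X Y : uniformType) (i : X -> Y) :
  is_completion i ->
  tukey_eq (@rev_incl (X * X)) (entourages_of X) (@rev_incl (Y * Y)) (entourages_of Y).
Proof.
move=> [_ [[_ i_induced] i_dense]]; split; apply: convergent_map_tukey_ge.
- exact: extend_convergent i_induced i_dense.
- exact: comap_convergent i_induced.
Qed.
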